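(* Let $\mathcal{G}$ be an ample Hausdorff groupoid and $R$ a commutative ring with unit. If the Steinberg algebra $A_R(\mathcal{G})$ is von Neumann regular, then for all units $u,v\in\mathcal{G}^{(0)}$ and every $x\in R\mathcal{G}_u^v$ there exists $y\in R\mathcal{G}_v^u$ with $xyx=x$ (product computed in the groupoid ring $R\mathcal{G}$).
   Context: A topological groupoid $\mathcal{G}$ has domain and range maps $d(x)=x^{-1}x$, $r(x)=xx^{-1}$, unit space $\mathcal{G}^{(0)}=d(\mathcal{G})$; $(x,y)$ is composable iff $d(x)=r(y)$. It is étale if $d$ is a local homeomorphism; an open bisection is an open $U\subseteq\mathcal{G}$ with $d|_U,r|_U$ homeomorphisms onto open subsets of $\mathcal{G}^{(0)}$; $\mathcal{G}$ is ample if it is étale with a basis of compact open bisections. For a commutative unital ring $R$, the Steinberg algebra $A_R(\mathcal{G})$ is the $R$-module of compactly supported locally constant (continuous, $R$ discrete) functions $\mathcal{G}\to R$, with pointwise addition and convolution $(f*g)(\gamma)=\sum_{\gamma=\alpha\beta}f(\alpha)g(\beta)$. For $u,v\in\mathcal{G}^{(0)}$, $\mathcal{G}_u^v=\{\gamma\in\mathcal{G}: d(\gamma)=u,\ r(\gamma)=v\}$. $R\mathcal{G}$ is the groupoid ring: the free $R$-module on $\mathcal{G}$ with product $g\cdot h=gh$ if $d(g)=r(h)$ and $0$ otherwise; $R\mathcal{G}_u^v\subseteq R\mathcal{G}$ is the set of finite $R$-linear combinations of elements of $\mathcal{G}_u^v$. A ring $A$ is von Neumann regular if $x\in xAx$ for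 all $x\in A$. *)

From HB Require Import structures.
From mathcomp Require Import all_boot all_algebra.
From Stdlib Require List.
Set Implicit Arguments. Unset Strict Implicit. Unset Printing Implicit Defensive.
Import GRing.Theory.
Local Open Scope ring_scope.

(* ---------- Abstract groupoids (Exel-style axioms, total multiplication,
   composability of (x,y) meaning d(x) = r(y) with d(x)=x^{-1}x, r(x)=xx^{-1}) *)
Record groupoid := Groupoid {
  gcar :> Type;
  ginv : gcar -> gcar;
  gmul : gcar -> gcar -> gcar;
  ginvK : forall x, ginv (ginv x) = x;
  gassoc : forall x y z,
    gmul (ginv x) x = gmul y (ginv y) -> gmul (ginv y) y = gmul z (ginv z) ->
    [/\ gmul (ginv (gmul x y)) (gmul x y) = gmul z (ginv z),
        gmul (ginv x) x = gmul (gmul y z) (ginv (gmul y z))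
      & gmul (gmul x y) z = gmul x (gmul y z)];
  gcancel : forall x y, gmul (ginv x) x = gmul y (ginv y) ->
    gmul (ginv x) (gmul x y) = y /\ gmul (gmul x y) (ginv y) = x }.

Definition dom (G : groupoid) (x : G) : G := gmul (ginv x) x.
Definition ran (G : groupoid) (x : G) : G := gmul x (ginv x).
Definition composable (G : groupoid) (x y : G) : Prop := dom x = ran y.
Definition unit_space (G : groupoid) (u : G) : Prop := exists g, u = dom g.
Definition hom_set (G : groupoid) (u v : G) (g : G) : Prop := dom g = u /\ ran g = v.

Definition is_topology (X : Type) (op : (X -> Prop) -> Prop) : Prop :=
  [/\ op (fun _ => True),
      forall U V, op U -> op V -> op (fun x => U x /\ V x)
    & forall F : (X -> Prop) -> Prop, (forall U, F U -> op U) ->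
        op (fun x => exists U, F U /\ U x)].

Definition hausdorff (X : Type) (op : (X -> Prop) -> Prop) : Prop :=
  forall x y : X, x <> y -> exists U V, [/\ op U, op V, U x, V y &
    forall z, ~ (U z /\ V z)].

Definition compact (X : Type) (op : (X -> Prop) -> Prop) (K : X -> Prop) : Prop :=
  forall F : (X -> Prop) -> Prop, (forall U, F U -> op U) ->
    (forall x, K x -> exists U, F U /\ U x) ->
    exists l : list (X -> Prop), (forall U, List.In U l -> F U) /\
      (forall x, K x -> exists U, List.In U l /\ U x).

Definition image (X Y : Type) (f : X -> Y) (V : X -> Prop) : Y -> Prop :=
  fun y => exists x, V x /\ y = f x.

(* inversion continuous; multiplication continuous on G^(2) with the
   subspace topology of the product topology *)
Definition topological_groupoid (G : groupoid) (op : (G -> Prop) -> Prop) : Prop :=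
  [/\ is_topology op,
      forall U, op U -> op (fun x => U (ginv x))
    & forall x y : G, composable x y -> forall W, op W -> W (gmul x y) ->
        exists U V, [/\ op U, op V, U x, V y &
          forall a b, U a -> V b -> composable a b -> W (gmul a b)]].

Definition open_in_units (G : groupoid) (op : (G -> Prop) -> Prop) (S : G -> Prop) : Prop :=
  exists O, op O /\ forall z, S z <-> (O z /\ unit_space z).

Definition homeo_onto_open_units (G : groupoid) (op : (G -> Prop) -> Prop)
    (f : G -> G) (U : G -> Prop) : Prop :=
  [/\ forall x y, U x -> U y -> f x = f y -> x = y,
      forall W, op W -> op (fun x => U x /\ W (f x))
    & forall V, op V -> (forall x, V x -> U x) -> open_in_units op (image f V)].

Definition etale (G : groupoid) (op : (G -> Prop) -> Prop) : Prop :=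
  topological_groupoid op /\
  forall g : G, exists U, [/\ op U, U g & homeo_onto_open_units op (@dom G) U].

Definition open_bisection (G : groupoid) (op : (G -> Prop) -> Prop) (U : G -> Prop) : Prop :=
  [/\ op U, homeo_onto_open_units op (@dom G) U & homeo_onto_open_units op (@ran G) U].

Definition ample (G : groupoid) (op : (G -> Prop) -> Prop) : Prop :=
  etale op /\
  forall (W : G -> Prop) (g : G), op W -> W g ->
    exists B, [/\ open_bisection op B, compact op B, B g & forall h, B h -> W h].

(* conv f g h  :<->  h = f * g (convolution), the sum over the decompositions
   gamma = alpha beta being finite (only terms with f alpha, g beta nonzero). *)
Definition conv (G : groupoid) (R : comPzRingType) (f g h : G -> R) : Prop :=
  forall gam : G, exists s : list (G * G),
    [/\ List.NoDup s,
        (forall p, List.In p s -> composable p.1 p.2 /\ gmul p.1 p.2 = gam),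
        (forall a b, composable a b -> gmul a b = gam -> f a != 0 -> g b != 0 ->
            List.In (a, b) s)
      & h gam = \sum_(p <- s) f p.1 * g p.2].

Definition locally_constant (X : Type) (R : Type) (op : (X -> Prop) -> Prop) (f : X -> R) : Prop :=
  forall x, exists U, [/\ op U, U x & forall y, U y -> f y = f x].

Definition compactly_supported (X : Type) (R : comPzRingType) (op : (X -> Prop) -> Prop)
    (f : X -> R) : Prop :=
  exists K, compact op K /\ forall x, f x != 0 -> K x.

Definition in_steinberg (G : groupoid) (R : comPzRingType) (op : (G -> Prop) -> Prop)
    (f : G -> R) : Prop :=
  locally_constant op f /\ compactly_supported op f.

Definition steinberg_vnr (G : groupoid) (R : comPzRingType) (op : (G -> Prop) -> Prop) : Prop :=
  forall f : G -> R, in_steinberg op f ->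
    exists g k : G -> R, [/\ in_steinberg op g, conv f g k & conv k f f].

(* elements of the groupoid ring RG are finitely supported coefficient functions
   G -> R; RG_u^v = those supported in G_u^v.  The product of RG is convolution. *)
Definition fin_supp (G : groupoid) (R : comPzRingType) (x : G -> R) : Prop :=
  exists s : list G, forall g, x g != 0 -> List.In g s.

Definition in_RG_hom (G : groupoid) (R : comPzRingType) (u v : G) (x : G -> R) : Prop :=
  fin_supp x /\ forall g, x g != 0 -> hom_set u v g.

(* Extend x to a locally constant compactly supported f by replacing each g in
   the support of x by a compact open bisection through g.  A bisection meets
   G^v and G_u in at most one point, so f agrees with x on G^v and on G_u.
   Write f = f * h * f with h in A_R(G) and let y be h cut down to G_v^u.
   Since x lives on G_u^v, the convolution x * y only sees that slice of h and
   equals f * h cut down to G_v^v, and (x * y) * x only sees that slice of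
   f * h, so it equals f * h * f = f on G_u^v, i.e. x.  Finally y is finitely
   supported because supp h is compact and d is locally injective. *)
From HB Require Import structures.
From mathcomp Require Import all_boot all_algebra.
From Stdlib Require Import Classical ClassicalEpsilon.
From Stdlib Require List.
Set Implicit Arguments. Unset Strict Implicit.
Local Open Scope ring_scope.
Import GRing.Theory.

Lemma eq_bigr_In (R : nmodType) (T : Type) (s : list T) (F F' : T -> R) :
  (forall p, List.In p s -> F p = F' p) -> \sum_(p <- s) F p = \sum_(p <- s) F' p.
Proof.
elim: s => [|a s IH] H; first by rewrite !big_nil.
rewrite !big_cons H /= ?IH // => [p Hp|]; [by apply: H; right | by left].
Qed.

Lemma big1_In (R : nmodType) (T : Type) (s : list T) (F : T -> R) :
  (forall p, List.In p s -> F p = 0) -> \sum_(p <- s) F p = 0.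
Proof. by move/eq_bigr_In->; rewrite big1. Qed.

Lemma big_NoDup_single (R : nmodType) (T : Type) (s : list T) (F : T -> R) (a : T) :
  List.NoDup s -> (forall g, List.In g s -> g <> a -> F g = 0) ->
  List.In a s \/ F a = 0 -> \sum_(g <- s) F g = F a.
Proof.
elim: s => [|g s IH] Hnd H Ha; first by rewrite big_nil; case: Ha.
move/List.NoDup_cons_iff: Hnd => [g_notin Hnd].
rewrite big_cons; case: (classic (g = a)) => [E|ne_ga].
  subst a; rewrite big1_In ?addr0 // => p Hp.
  by apply: H; [right | move=> E; subst p; apply: g_notin].
rewrite H /= ?add0r; [|by left|by []].
apply: IH => // [p Hp|]; first by apply: H; right.
by case: Ha => [[E|Hin]|Hz]; [|left|right].
Qed.

Lemma NoDup_cover (T : Type) (s0 : list T) :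
  exists s, List.NoDup s /\ forall g, List.In g s0 -> List.In g s.
Proof.
elim: s0 => [|a s0 [s [Hnd Hs]]]; first by exists nil; split => //; constructor.
case: (classic (List.In a s)) => Ha.
  by exists s; split => // g [<-|/Hs].
exists (a :: s); split; first by constructor.
by move=> g [<-|/Hs]; [left | right].
Qed.

Definition restrict (T : Type) (R : nmodType) (P : T -> Prop) (h : T -> R) : T -> R :=
  fun a => if excluded_middle_informative (P a) then h a else 0.

Section Restrict.
Variables (T : Type) (R : nmodType) (P : T -> Prop) (h : T -> R).

Lemma restrict_in a : P a -> restrict P h a = h a.
Proof. by rewrite /restrict; case: excluded_middle_informative. Qed.

Lemma restrict_out a : ~ P a -> restrict P h a = 0.
Proof. by rewrite /restrict; case: excluded_middle_informative. Qed.

Lemma restrict_neq0 a : restrict P h a != 0 -> P a /\ h a != 0.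
Proof.
rewrite /restrict; case: (excluded_middle_informative (P a)) => [Pa|nPa].
  by move=> nz; split.
by rewrite eqxx.
Qed.

End Restrict.

Lemma big_restrict_at (T : Type) (R : nmodType) (B : T -> T -> Prop) (x : T -> R)
    (s : list T) (a : T) :
  List.NoDup s -> (forall g, x g != 0 -> List.In g s) -> B a a ->
  (forall g, x g != 0 -> B g a -> g = a) ->
  \sum_(g <- s) restrict (B g) (fun=> x g) a = x a.
Proof.
move=> Hnd Hs Baa Huniq; rewrite (@big_NoDup_single _ _ s _ a) ?restrict_in //.
  move=> g _ ne_ga; case: (classic (B g a)) => [Bga|nBga]; last by rewrite restrict_out.
  rewrite restrict_in //; apply/eqP; apply: contra_notT ne_ga => nz.
  exact: Huniq.
case: (classic (List.In a s)) => [|a_notin]; first by left.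
by right; apply/eqP; apply: contra_notT a_notin => /Hs.
Qed.

Section Topology.
Variables (X : Type) (op : (X -> Prop) -> Prop).
Hypothesis op_topology : is_topology op.

Lemma compact_closed (K : X -> Prop) (z : X) :
  hausdorff op -> compact op K -> ~ K z ->
  exists U, [/\ op U, U z & forall w, U w -> ~ K w].
Proof.
case: op_topology => [opT opI _] Hsep HK Kz.
pose F V := op V /\ exists U, [/\ op U, U z & forall w, ~ (U w /\ V w)].
have [l [Fl Kl]] : exists l, (forall V, List.In V l -> F V) /\
    forall w, K w -> exists V, List.In V l /\ V w.
  apply: HK => [V [] //|b Kb].
  have [|U [V [HU HV Uz Vb UV]]] := Hsep z b; first by move=> E; subst b.
  by exists V; split => //; split => //; exists U.
have [U [HU Uz Ul]] : exists U, [/\ op U, U z &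
    forall w, U w -> forall V, List.In V l -> ~ V w].
  elim: l Fl {Kl} => [|V l IH] Fl; first by exists (fun=> True).
  have [U [HU Uz Ul]] := IH (fun W HW => Fl W (or_intror HW)).
  have [_ [U' [HU' U'z U'V]]] := Fl V (or_introl erefl).
  exists (fun w => U w /\ U' w); split => //; first exact: opI.
  move=> w [Uw U'w] W [<- Vw|lW]; last exact: Ul w Uw W lW.
  exact: U'V w (conj U'w Vw).
exists U; split => // w Uw Kw; have [V [lV Vw]] := Kl w Kw.
exact: Ul w Uw V lV Vw.
Qed.

Lemma compact_set0 : compact op (fun=> False).
Proof. by move=> F _ _; exists nil. Qed.

Lemma compact_setU (K1 K2 : X -> Prop) :
  compact op K1 -> compact op K2 -> compact op (fun w => K1 w \/ K2 w).
Proof.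
move=> HK1 HK2 F opF cover.
have [l1 [Fl1 Kl1]] := HK1 F opF (fun w Kw => cover w (or_introl Kw)).
have [l2 [Fl2 Kl2]] := HK2 F opF (fun w Kw => cover w (or_intror Kw)).
exists (l1 ++ l2); split.
  by move=> U lU; case: (List.in_app_or _ _ _ lU); [apply: Fl1 | apply: Fl2].
move=> w [K1w|K2w].
  have [U [lU Uw]] := Kl1 w K1w.
  by exists U; split => //; apply: List.in_or_app; left.
have [U [lU Uw]] := Kl2 w K2w.
by exists U; split => //; apply: List.in_or_app; right.
Qed.

Lemma locally_constant_restrict (R : nmodType) (B : X -> Prop) (c : R) :
  hausdorff op -> op B -> compact op B -> locally_constant op (restrict B (fun=> c)).
Proof.
move=> Hsep opB HB z; case: (classic (B z)) => [Bz|nBz].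
  by exists B; split => // w Bw; rewrite !restrict_in.
have [U [HU Uz UB]] := @compact_closed B z Hsep HB nBz.
by exists U; split => // w Uw; rewrite !restrict_out //; apply: UB.
Qed.

Lemma locally_constant_big (I : Type) (R : nmodType) (s : list I) (F : I -> X -> R) :
  (forall i, List.In i s -> locally_constant op (F i)) ->
  locally_constant op (fun w => \sum_(i <- s) F i w).
Proof.
case: op_topology => [opT opI _].
elim: s => [|i s IH] HF z; first by exists (fun=> True); split => // w _; rewrite !big_nil.
have [U [HU Uz UF]] := IH (fun j Hj => HF j (or_intror Hj)) z.
have [V [HV Vz VF]] := HF i (or_introl erefl) z.
exists (fun w => U w /\ V w); split => //; first exact: opI.
by move=> w [Uw Vw]; rewrite !big_cons UF ?VF.
Qed.

Lemma compactly_supported_restrict (R : comPzRingType) (B : X -> Prop) (h : X -> R) :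
  compact op B -> compactly_supported op (restrict B h).
Proof. by move=> HB; exists B; split => // w nz; case: (restrict_neq0 nz). Qed.

Lemma compactly_supported_big (I : Type) (R : comPzRingType) (s : list I)
    (F : I -> X -> R) :
  (forall i, List.In i s -> compactly_supported op (F i)) ->
  compactly_supported op (fun w => \sum_(i <- s) F i w).
Proof.
elim: s => [|i s IH] HF.
  by exists (fun=> False); split => [|w]; [exact: compact_set0 | rewrite big_nil eqxx].
have [K1 [HK1 K1F]] := HF i (or_introl erefl).
have [K2 [HK2 K2F]] := IH (fun j Hj => HF j (or_intror Hj)).
exists (fun w => K1 w \/ K2 w); split; first exact: compact_setU.
move=> w; rewrite big_cons; case: (eqVneq (F i w) 0) => [->|/K1F]; last by left.
by rewrite add0r => /K2F; right.
Qed.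

Lemma compact_fiber_finite (Y : Type) (f : X -> Y) (K : X -> Prop) (y : Y) :
  compact op K ->
  (forall w, K w -> exists U, [/\ op U, U w &
     forall a b, U a -> U b -> f a = f b -> a = b]) ->
  exists s, forall w, K w -> f w = y -> List.In w s.
Proof.
move=> HK locinj.
pose F U := op U /\ forall a b, U a -> U b -> f a = f b -> a = b.
have [l [Fl Kl]] : exists l, (forall U, List.In U l -> F U) /\
    forall w, K w -> exists U, List.In U l /\ U w.
  apply: HK => [U [] //|w /locinj [U [HU Uw Uinj]]].
  by exists U; split => //; split.
suff [s Hs] : exists s, forall w, f w = y ->
    (exists U, List.In U l /\ U w) -> List.In w s.
  by exists s => w /Kl Hw fw; apply: Hs.
elim: l Fl {Kl} => [|U l IH] Fl; first by exists nil => w _ [U [[] _]].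
have [s Hs] := IH (fun W HW => Fl W (or_intror HW)).
have [_ Uinj] := Fl U (or_introl erefl).
case: (classic (exists w0, f w0 = y /\ U w0)) => [[w0 [fw0 Uw0]]|noU].
  exists (w0 :: s) => w fw [W [[<- Uw|lW Ww]]]; first by left; apply: Uinj; rewrite ?fw.
  by right; apply: Hs => //; exists W.
exists s => w fw [W [[<- Uw|lW Ww]]]; first by case: noU; exists w.
by apply: Hs => //; exists W.
Qed.

End Topology.

Section Groupoid.
Variable G : groupoid.

Lemma dom_mul (a b : G) : composable a b -> dom (gmul a b) = dom b.
Proof.
rewrite /composable /dom /ran => ab.
have bb : gmul (ginv b) b = gmul (ginv b) (ginv (ginv b)) by rewrite ginvK.
by case: (gassoc ab bb) => -> _ _; rewrite ginvK.
Qed.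

Lemma ran_mul (a b : G) : composable a b -> ran (gmul a b) = ran a.
Proof.
rewrite /composable /dom /ran => ab.
have aa : gmul (ginv (ginv a)) (ginv a) = gmul a (ginv a) by rewrite ginvK.
by case: (gassoc aa ab) => _ E _; rewrite ginvK in E; rewrite -E.
Qed.

Variable R : comPzRingType.

Lemma conv_restrict (P : G -> Prop) (f g h f' g' h' : G -> R) :
  conv f g h ->
  (forall a b, composable a b -> f' a != 0 -> g' b != 0 -> P (gmul a b)) ->
  (forall a b, composable a b -> P (gmul a b) -> f' a != 0 -> g' b != 0 ->
     f a != 0 /\ g b != 0) ->
  (forall a b, composable a b -> P (gmul a b) -> f' a * g' b = f a * g b) ->
  (forall c, P c -> h' c = h c) -> (forall c, ~ P c -> h' c = 0) ->
  conv f' g' h'.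
Proof.
move=> fgh supp nz prod hP hnP c; case: (classic (P c)) => [Pc|nPc].
  have [s [Hnd Hs Hall Hsum]] := fgh c.
  exists s; split => // [a b ab abc f'a g'b|].
    have Pab : P (gmul a b) by rewrite abc.
    by have [fa gb] := nz a b ab Pab f'a g'b; apply: Hall.
  rewrite hP // Hsum; apply: eq_bigr_In => p lp.
  by have [ab abc] := Hs p lp; rewrite prod // abc.
exists nil; split => //; first by constructor.
  by move=> a b ab abc f'a g'b; case: nPc; rewrite -abc; apply: supp.
by rewrite hnP // big_nil.
Qed.

Section RestrictToSlices.
Variables (u v : G) (x f : G -> R).
Hypothesis x_hom : forall g, x g != 0 -> hom_set u v g.

Lemma conv_restrict_left (h k : G -> R) :
  (forall a, ran a = v -> f a = x a) ->
  conv f h k -> conv x (restrict (hom_set v u) h) (restrict (hom_set v v) k).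
Proof.
move=> f_ran fhk; apply: (conv_restrict (P := hom_set v v) fhk).
- move=> a b ab xa yb; have [_ ra] := x_hom xa.
  have [[db _] _] := restrict_neq0 yb.
  by split; rewrite ?dom_mul ?ran_mul.
- move=> a b ab [_ rab] xa yb; rewrite f_ran -?(ran_mul ab) //.
  by split => //; case: (restrict_neq0 yb).
- move=> a b ab [dab rab]; rewrite f_ran -?(ran_mul ab) //.
  case: (eqVneq (x a) 0) => [->|xa]; first by rewrite !mul0r.
  have [da _] := x_hom xa.
  by rewrite restrict_in //; split; [rewrite -(dom_mul ab) | rewrite -ab].
- by move=> c Pc; rewrite restrict_in.
- by move=> c nPc; rewrite restrict_out.
Qed.

Lemma conv_restrict_right (k : G -> R) :
  (forall a, dom a = u -> f a = x a) ->
  conv k f f -> conv (restrict (hom_set v v) k) x x.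
Proof.
move=> f_dom kff; apply: (conv_restrict (P := hom_set u v) kff).
- move=> a b ab ka xb; have [[_ ra] _] := restrict_neq0 ka.
  have [db _] := x_hom xb.
  by split; rewrite ?dom_mul ?ran_mul.
- move=> a b ab [dab _] ka xb; rewrite f_dom -?(dom_mul ab) //.
  by split => //; case: (restrict_neq0 ka).
- move=> a b ab [dab rab]; rewrite f_dom -?(dom_mul ab) //.
  case: (eqVneq (x b) 0) => [->|xb]; first by rewrite !mulr0.
  have [_ rb] := x_hom xb.
  by rewrite restrict_in //; split; [rewrite ab | rewrite -(ran_mul ab)].
- by move=> c [dc _]; rewrite f_dom.
- move=> c nPc; apply/eqP; apply: contra_notT nPc => xc; exact: x_hom.
Qed.

End RestrictToSlices.

Section Ample.
Variable op : (G -> Prop) -> Prop.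
Hypothesis G_ample : ample op.

Lemma ample_bisections : exists B : G -> G -> Prop,
  forall g, [/\ open_bisection op (B g), compact op (B g) & B g g].
Proof.
apply: (choice (fun g B => [/\ open_bisection op B, compact op B & B g])) => g.
case: G_ample => [[[[opT _ _] _ _] _] bisections].
by have [B [? ? ? _]] := bisections (fun=> True) g opT I; exists B.
Qed.

Lemma compactly_supported_dom_fiber (h : G -> R) (v : G) :
  compactly_supported op h -> exists s, forall g, dom g = v -> h g != 0 -> List.In g s.
Proof.
case=> K [HK Kh]; case: G_ample => [[_ dom_locally_homeo] _].
have [|s Hs] := @compact_fiber_finite _ op _ (@dom G) K v HK.
  by move=> w _; have [U [opU Uw [Uinj _ _]]] := dom_locally_homeo w; exists U.
by exists s => g dg hg; apply: Hs => //; apply: Kh.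
Qed.

Hypothesis G_hausdorff : hausdorff op.

Lemma steinberg_extension (u v : G) (x : G -> R) :
  in_RG_hom u v x -> exists f, [/\ in_steinberg op f,
    forall a, ran a = v -> f a = x a & forall a, dom a = u -> f a = x a].
Proof.
case=> -[s0 Hs0] x_hom.
have op_topology : is_topology op by case: G_ample => [[[]]].
have [B HB] := ample_bisections.
have [s [Hnd Hs]] := NoDup_cover s0.
have supp_x g : x g != 0 -> List.In g s by move=> xg; apply/Hs/Hs0.
exists (fun a => \sum_(g <- s) restrict (B g) (fun=> x g) a); split.
- split; first apply: locally_constant_big => // g _.
    by case: (HB g) => [[opB _ _] cB _]; apply: locally_constant_restrict.
  apply: compactly_supported_big => g _.
  by case: (HB g) => _ cB _; apply: compactly_supported_restrict.
- move=> a ra; apply: big_restrict_at => //; first by case: (HB a).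
  move=> g xg Bga; have [_ rg] := x_hom g xg.
  case: (HB g) => [[_ _ [rinj _ _]] _ Bgg].
  by apply: rinj => //; rewrite rg ra.
- move=> a da; apply: big_restrict_at => //; first by case: (HB a).
  move=> g xg Bga; have [dg _] := x_hom g xg.
  case: (HB g) => [[_ [dinj _ _] _] _ Bgg].
  by apply: dinj => //; rewrite dg da.
Qed.

End Ample.

End Groupoid.

Theorem proposition3p1 (G : groupoid) (op : (G -> Prop) -> Prop) (R : comPzRingType) :
  ample op -> hausdorff op -> steinberg_vnr R op ->
  forall u v : G, unit_space u -> unit_space v ->
  forall x : G -> R, in_RG_hom u v x ->
    exists y : G -> R, in_RG_hom v u y /\
      exists k : G -> R, conv x y k /\ conv k x x.
Proof.
move=> G_ample G_hausdorff vnr u v _ _ x xuv.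
have [f [f_stein f_ran f_dom]] := steinberg_extension G_ample G_hausdorff xuv.
have [h [k [[_ h_cs] fhk kff]]] := vnr f f_stein.
have [s hs] := compactly_supported_dom_fiber G_ample v h_cs.
have x_hom := xuv.2.
exists (restrict (hom_set v u) h); split.
  split; last by move=> g yg; case: (restrict_neq0 yg).
  exists s => g yg; have [[dg _] hg] := restrict_neq0 yg.
  exact: hs.
exists (restrict (hom_set v v) k); split.
  exact (conv_restrict_left x_hom f_ran fhk).
exact (conv_restrict_right x_hom f_dom kff).
Qed.
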